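(* There exist constants $C_1,C_2>0$ (depending only on $r$) such that for all $x\ge1$, $$\limsup_{N\to\infty}\sum_{k=1}^N P\big(R_{k,N}>xN^{1-r}\big)\le C_1e^{-C_2x^{1/r}}.$$
   Context: Fix $r\in(0,1)$. Consider the following multitype Yule process. At time $0$ a single individual of type $1$ is born. No individual ever dies, and each individual independently gives birth at rate $1$. When a new individual is born, independently of everything else, with probability $1-r$ it has the same type as its parent and with probability $r$ it has a new type different from all previously observed types. Individuals are numbered in order of birth (the initial one is the 1st); if the $k$-th individual born has a type different from its parent, that type is called type $k$. Let $T_N$ be the time the population size reaches $N$, and $R_{k,N}$ the number of type-$k$ individuals at time $T_N$. *)

From Stdlib Require Import Reals List Arith.
From Coquelicot Require Import Coquelicot.
Import ListNotations.
Open Scope R_scope.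

(* Genealogical history of the multitype Yule process up to the time the
   population has n+1 individuals (n births after the initial one).
   Individuals have 0-based ids 0,1,2,...; the j-th entry (0-based) of a
   history describes individual j+1 as (parent id, mutated?). *)
Definition history := list (nat * bool).

(* At the birth of
   individual n+1 the population has n+1 individuals, each giving birth at
   rate 1, so the parent is uniform on {0,...,n}; the child gets a new type
   with probability r and its parent's type with probability 1-r. *)
Fixpoint hists (r : R) (n : nat) : list (history * R) :=
  match n with
  | O => [([], 1)]
  | S m =>
      flat_map (fun hw : history * R =>
        flat_map (fun p : nat =>
          map (fun b : bool =>
                 (fst hw ++ [(p, b)],
                  snd hw * / INR (S m) * (if b then r else 1 - r)))
              [true; false])
          (seq 0 (S m)))
        (hists r m)
  end.

(* Types (labelled as in the paper, 1-based): the initial individual has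
   type 1; if the individual with 1-based number k (0-based id k-1) has a
   type different from its parent, that type is called type k. *)
Definition add_indiv (ts : list nat) (pb : nat * bool) : list nat :=
  ts ++ [if snd pb then S (length ts) else nth (fst pb) ts 0%nat].

Definition types_of (h : history) : list nat := fold_left add_indiv h [1%nat].

Definition Rcount (k : nat) (h : history) : nat :=
  count_occ Nat.eq_dec (types_of h) k.

(* P(R_{k,N} > x N^{1-r}) : the population reaches size N after N-1 births. *)
Definition prob_big (r x : R) (N k : nat) : R :=
  fold_right Rplus 0
    (map (fun hw : history * R =>
            if Rlt_dec (x * Rpower (INR N) (1 - r)) (INR (Rcount k (fst hw)))
            then snd hw else 0)
         (hists r (N - 1))).

Definition tail_sum (r x : R) (N : nat) : R :=
  fold_right Rplus 0 (map (prob_big r x N) (seq 1 N)).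

From Stdlib Require Import Reals List Arith Lia Lra.
From Coquelicot Require Import Coquelicot.
Import ListNotations.
Open Scope R_scope.

(* Write b = (1 - r) q and R = R_{k,N}. Markov's inequality for the rising factorial
   R (R + 1) ... (R + q - 1) bounds P(R > y) by its mean over y^q. A child born into a
   population of n individuals joins type k with probability (1 - r) R_k / n, which
   multiplies the mean rising factorial by 1 + b/n; so it is at most
   q! (1 + b/k) ... (1 + b/(N-1)). Summed over k these products are at most
   2 e 2^l N^b / l! with l = floor b, and (x N^(1-r))^q = x^q N^b, so the tail sum is
   at most 2 e q! 2^l / (l! x^q) <= 2 e (4 q^r / x)^q, the point being that
   q! / l! <= q^(q-l) ~ q^(r q). Choosing q ~ (x/8)^(1/r) makes this about 2 e 2^(-q). *)

Definition lsum {A} (l : list A) (g : A -> R) : R := fold_right Rplus 0 (map g l).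

Lemma lsum_app {A} (l1 l2 : list A) g : lsum (l1 ++ l2) g = lsum l1 g + lsum l2 g.
Proof. induction l1 as [|a l1 IH]; unfold lsum in *; simpl; [ring | rewrite IH; ring]. Qed.

Lemma lsum_flat_map {A B} (f : A -> list B) l g :
  lsum (flat_map f l) g = lsum l (fun a => lsum (f a) g).
Proof. induction l as [|a l IH]; [reflexivity|]. simpl. rewrite lsum_app, IH. reflexivity. Qed.

Lemma lsum_map {A B} (f : A -> B) l g : lsum (map f l) g = lsum l (fun a => g (f a)).
Proof. unfold lsum. rewrite map_map. reflexivity. Qed.

Lemma lsum_ext {A} (l : list A) g1 g2 :
  (forall a, In a l -> g1 a = g2 a) -> lsum l g1 = lsum l g2.
Proof. intros H. unfold lsum. f_equal. apply map_ext_in. exact H. Qed.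

Lemma lsum_le {A} (l : list A) g1 g2 :
  (forall a, In a l -> g1 a <= g2 a) -> lsum l g1 <= lsum l g2.
Proof.
  induction l as [|a l IH]; intros H; unfold lsum in *; simpl; [lra|].
  apply Rplus_le_compat; [apply H; left; reflexivity | apply IH; intros; apply H; right; assumption].
Qed.

Lemma lsum_mult_l {A} (l : list A) c g : lsum l (fun a => c * g a) = c * lsum l g.
Proof. induction l as [|a l IH]; unfold lsum in *; simpl; [ring | rewrite IH; ring]. Qed.

Lemma lsum_plus {A} (l : list A) g1 g2 :
  lsum l (fun a => g1 a + g2 a) = lsum l g1 + lsum l g2.
Proof. induction l as [|a l IH]; unfold lsum in *; simpl; [ring | rewrite IH; ring]. Qed.

Lemma lsum_const {A} (l : list A) c : lsum l (fun _ => c) = INR (length l) * c.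
Proof.
  induction l as [|a l IH]; [unfold lsum; simpl; ring|].
  unfold lsum in *. simpl length. rewrite S_INR. simpl. rewrite IH. ring.
Qed.

Lemma lsum_nth (ts : list nat) (F : nat -> R) :
  lsum (seq 0 (length ts)) (fun p => F (nth p ts 0%nat)) = lsum ts F.
Proof.
  induction ts as [|t ts IH]; [reflexivity|].
  simpl length. unfold lsum in *. simpl. rewrite <- seq_shift, map_map. simpl. rewrite IH. reflexivity.
Qed.

Definition kronecker (z k : nat) : R := if Nat.eq_dec z k then 1 else 0.

Lemma lsum_kronecker ts k : lsum ts (fun z => kronecker z k) = INR (count_occ Nat.eq_dec ts k).
Proof.
  induction ts as [|t ts IH]; [reflexivity|]. unfold lsum in *. simpl. rewrite IH. unfold kronecker.
  destruct (Nat.eq_dec t k); try rewrite S_INR; ring.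
Qed.

Section Expectation.
Variable r : R.
Hypothesis hr : 0 <= r <= 1.

Definition expect (n : nat) (g : history -> R) : R :=
  lsum (hists r n) (fun hw => snd hw * g (fst hw)).

Definition expect_next (n : nat) (g : history -> R) (h : history) : R :=
  lsum (seq 0 (S n)) (fun p =>
    / INR (S n) * (r * g (h ++ [(p, true)]) + (1 - r) * g (h ++ [(p, false)]))).

Lemma hists_length_weight n hw : In hw (hists r n) -> length (fst hw) = n /\ 0 <= snd hw.
Proof.
  revert hw. induction n as [|n IH]; intros hw H.
  - destruct H as [<-|[]]. simpl. split; [reflexivity | lra].
  - cbn [hists] in H. apply in_flat_map in H as [hw0 [H0 H1]].
    apply in_flat_map in H1 as [p [_ H2]].
    apply in_map_iff in H2 as [b [<- _]]. cbn [fst snd].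
    destruct (IH hw0 H0) as [Hl Hw]. split.
    + rewrite length_app, Hl. simpl. lia.
    + assert (0 < / INR (S n)) by (apply Rinv_0_lt_compat, lt_0_INR; lia).
      destruct b; apply Rmult_le_pos; nra.
Qed.

Lemma expect_S n g : expect (S n) g = expect n (expect_next n g).
Proof.
  unfold expect, expect_next. cbn [hists]. rewrite lsum_flat_map. apply lsum_ext. intros hw _.
  rewrite lsum_flat_map, <- lsum_mult_l. apply lsum_ext. intros p _.
  rewrite lsum_map. unfold lsum. simpl. ring.
Qed.

Lemma expect_ext n g1 g2 : (forall h, length h = n -> g1 h = g2 h) -> expect n g1 = expect n g2.
Proof.
  intros H. apply lsum_ext. intros hw Hin.
  destruct (hists_length_weight n hw Hin). rewrite H; auto.
Qed.

Lemma expect_le n g1 g2 : (forall h, length h = n -> g1 h <= g2 h) -> expect n g1 <= expect n g2.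
Proof.
  intros H. apply lsum_le. intros hw Hin.
  destruct (hists_length_weight n hw Hin). apply Rmult_le_compat_l; auto.
Qed.

Lemma expect_mult_l n c g : expect n (fun h => c * g h) = c * expect n g.
Proof. unfold expect. rewrite <- lsum_mult_l. apply lsum_ext. intros; ring. Qed.

Lemma expect_1 n : expect n (fun _ => 1) = 1.
Proof.
  induction n as [|n IH]; [unfold expect, lsum; simpl; ring|].
  rewrite expect_S. transitivity (expect n (fun _ => 1)); [|exact IH].
  apply expect_ext. intros h _. unfold expect_next.
  rewrite lsum_const, length_seq. field. apply not_0_INR. discriminate.
Qed.

End Expectation.

Lemma prob_big_expect r x N k :
  prob_big r x N k = expect r (N - 1) (fun h =>
    if Rlt_dec (x * Rpower (INR N) (1 - r)) (INR (Rcount k h)) then 1 else 0).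
Proof.
  apply lsum_ext. intros hw _. destruct Rlt_dec; ring.
Qed.

Definition new_label (ts : list nat) (pb : nat * bool) : nat :=
  if snd pb then S (length ts) else nth (fst pb) ts 0%nat.

Lemma types_of_app h pb : types_of (h ++ [pb]) = types_of h ++ [new_label (types_of h) pb].
Proof. unfold types_of. rewrite fold_left_app. reflexivity. Qed.

Lemma length_types_of h : length (types_of h) = S (length h).
Proof.
  induction h as [|pb h IH] using rev_ind; [reflexivity|].
  rewrite types_of_app, !length_app, IH. simpl. lia.
Qed.

Lemma types_of_le_length h z : In z (types_of h) -> (z <= length (types_of h))%nat.
Proof.
  revert z. induction h as [|pb h IH] using rev_ind; [intros z [<-|[]]; simpl; lia|].
  rewrite types_of_app, length_app. simpl length.
  intros z [Hz|[<-|[]]]%in_app_or; [specialize (IH _ Hz); lia|].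
  unfold new_label. destruct (snd pb); [lia|].
  destruct (Nat.lt_ge_cases (fst pb) (length (types_of h))) as [Hp|Hp].
  - specialize (IH _ (nth_In _ 0%nat Hp)). lia.
  - rewrite nth_overflow by exact Hp. lia.
Qed.

Lemma Rcount_unborn k h : (S (length h) < k)%nat -> Rcount k h = 0%nat.
Proof.
  intros Hk. apply count_occ_not_In. intros Hin.
  apply types_of_le_length in Hin. rewrite length_types_of in Hin. lia.
Qed.

Lemma Rcount_app k h pb :
  INR (Rcount k (h ++ [pb])) = INR (Rcount k h) + kronecker (new_label (types_of h) pb) k.
Proof.
  unfold Rcount. rewrite types_of_app, count_occ_app, plus_INR. simpl.
  unfold kronecker. destruct Nat.eq_dec; simpl; ring.
Qed.

Fixpoint rising (c : R) (q : nat) : R :=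
  match q with O => 1 | S q' => rising c q' * (c + INR q') end.

Lemma rising_shift c q : rising (c + 1) q * c = rising c q * (c + INR q).
Proof.
  induction q as [|q IH]; [simpl; ring|].
  simpl rising. rewrite S_INR.
  transitivity (rising (c + 1) q * c * (c + 1 + INR q)); [ring|]. rewrite IH. ring.
Qed.

Lemma rising_ge0 c q : 0 <= c -> 0 <= rising c q.
Proof.
  intros Hc. induction q as [|q IH]; simpl; [lra|].
  apply Rmult_le_pos; [exact IH|]. pose proof (pos_INR q). lra.
Qed.

Lemma pow_le_rising c q : 0 <= c -> c ^ q <= rising c q.
Proof.
  intros Hc. induction q as [|q IH]; simpl; [lra|]. rewrite Rmult_comm.
  apply Rmult_le_compat; auto using pow_le. pose proof (pos_INR q). lra.
Qed.

Lemma rising_0 q : (1 <= q)%nat -> rising 0 q = 0.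
Proof.
  intros Hq. induction q as [|q IH]; [lia|]. simpl rising.
  destruct q as [|q]; [simpl; ring|]. rewrite IH by lia. ring.
Qed.

Lemma rising_1 q : rising 1 q = INR (fact q).
Proof.
  induction q as [|q IH]; [reflexivity|].
  simpl rising. rewrite IH, fact_simpl, mult_INR, S_INR. ring.
Qed.

Lemma lsum_rising_kronecker ts k q :
  lsum ts (fun z => rising (INR (count_occ Nat.eq_dec ts k) + kronecker z k) q)
  = (INR (length ts) + INR q) * rising (INR (count_occ Nat.eq_dec ts k)) q.
Proof.
  set (c := INR (count_occ Nat.eq_dec ts k)).
  rewrite (lsum_ext _ _ (fun z => rising c q + (rising (c + 1) q - rising c q) * kronecker z k)).
  - rewrite lsum_plus, lsum_const, lsum_mult_l, lsum_kronecker. fold c.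
    rewrite Rmult_comm, Rmult_minus_distr_r, rising_shift. ring.
  - intros z _. unfold kronecker. destruct Nat.eq_dec; [ring | rewrite Rplus_0_r; ring].
Qed.

Lemma expect_next_rising r q n k h : length h = n ->
  expect_next r n (fun h => rising (INR (Rcount k h)) q) h =
  r * rising (INR (Rcount k h) + kronecker (S (S n)) k) q
  + (1 - r) * (1 + INR q / INR (S n)) * rising (INR (Rcount k h)) q.
Proof.
  intros Hl. unfold expect_next.
  assert (Hts : length (types_of h) = S n) by (rewrite length_types_of; lia).
  rewrite (lsum_ext _ _ (fun p => / INR (S n) *
     (r * rising (INR (Rcount k h) + kronecker (S (S n)) k) q
      + (1 - r) * rising (INR (Rcount k h) + kronecker (nth p (types_of h) 0%nat) k) q))).
  2:{ intros p _. rewrite !Rcount_app. unfold new_label. cbn [fst snd]. rewrite Hts. reflexivity. }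
  rewrite lsum_mult_l, lsum_plus, lsum_const, !lsum_mult_l, length_seq.
  replace (seq 0 (S n)) with (seq 0 (length (types_of h))) by (rewrite Hts; reflexivity).
  rewrite (lsum_nth (types_of h) (fun z => rising (INR (Rcount k h) + kronecker z k) q)).
  unfold Rcount. rewrite lsum_rising_kronecker, Hts.
  field. apply not_0_INR. discriminate.
Qed.

(* [growth b k n = (1 + b/k) (1 + b/(k+1)) ... (1 + b/(n-1))] for [1 <= k <= n],
   and [0] for [n < k]. *)
Fixpoint growth (b : R) (k n : nat) : R :=
  match n with
  | O => 0
  | S m => if Nat.eqb k (S m) then 1 else growth b k m * (1 + b / INR m)
  end.

Lemma growth_ge0 b k n : 0 <= b -> 0 <= growth b k n.
Proof.
  intros Hb. induction n as [|n IH]; simpl; [lra|]. destruct Nat.eqb; [lra|].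
  apply Rmult_le_pos; [exact IH|].
  destruct n as [|n]; [simpl; unfold Rdiv; rewrite Rinv_0; lra|].
  assert (0 <= b / INR (S n)) by (apply Rdiv_le_0_compat; [lra | apply lt_0_INR; lia]). lra.
Qed.

Lemma growth_S b k n : k <> S n -> growth b k (S n) = growth b k n * (1 + b / INR n).
Proof. intros Hk. simpl. apply Nat.eqb_neq in Hk. rewrite Hk. reflexivity. Qed.

Lemma growth_diag b n : growth b (S n) (S n) = 1.
Proof. simpl. rewrite Nat.eqb_refl. reflexivity. Qed.

Lemma expect_rising_le r q n k : 0 <= r <= 1 -> (1 <= q)%nat ->
  expect r n (fun h => rising (INR (Rcount k h)) q) <=
  INR (fact q) * growth ((1 - r) * INR q) k (S n).
Proof.
  intros hr hq. set (b := (1 - r) * INR q).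
  assert (Hb : 0 <= b) by (apply Rmult_le_pos; [lra | apply pos_INR]).
  assert (Hfact : 0 < INR (fact q)) by apply INR_fact_lt_0.
  induction n as [|n IH].
  - unfold expect, lsum, Rcount, types_of. simpl.
    destruct k as [|[|k]]; simpl; rewrite ?rising_0, ?rising_1 by exact hq; lra.
  - rewrite expect_S, (expect_ext _ hr _ _ _ (expect_next_rising r q n k)).
    destruct (Nat.eq_dec k (S (S n))) as [->|Hk].
    + rewrite growth_diag.
      rewrite (expect_ext _ hr _ _ (fun _ => r * INR (fact q))).
      { rewrite <- (Rmult_1_r (r * INR (fact q))), expect_mult_l, expect_1 by exact hr. nra. }
      intros h Hh. rewrite Rcount_unborn by lia. unfold kronecker.
      destruct Nat.eq_dec; [|lia]. simpl INR. rewrite Rplus_0_l, rising_0, rising_1 by exact hq. ring.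
    + rewrite growth_S by exact Hk.
      rewrite (expect_ext _ hr _ _ (fun h => (1 + b / INR (S n)) * rising (INR (Rcount k h)) q)).
      { rewrite expect_mult_l by exact hr.
        assert (0 <= b / INR (S n)) by (apply Rdiv_le_0_compat; [lra | apply lt_0_INR; lia]).
        rewrite (Rmult_comm (growth _ _ _)), <- Rmult_assoc, (Rmult_comm _ (1 + _)), Rmult_assoc.
        apply Rmult_le_compat_l; [lra | exact IH]. }
      intros h _. unfold kronecker. destruct Nat.eq_dec; [lia|]. rewrite Rplus_0_r. unfold b.
      field. apply not_0_INR. discriminate.
Qed.

Lemma indicator_le_rising y c q : 0 < y -> 0 <= c ->
  (if Rlt_dec y c then 1 else 0) <= / y ^ q * rising c q.
Proof.
  intros Hy Hc. assert (Hyq : 0 < y ^ q) by (apply pow_lt; exact Hy).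
  destruct Rlt_dec as [Hlt|_].
  - apply (Rmult_le_reg_l (y ^ q)); [exact Hyq|].
    rewrite <- Rmult_assoc, Rinv_r, Rmult_1_l, Rmult_1_r by lra.
    apply Rle_trans with (c ^ q); [apply pow_incr; lra | apply pow_le_rising; exact Hc].
  - apply Rmult_le_pos; [left; apply Rinv_0_lt_compat; exact Hyq | apply rising_ge0; exact Hc].
Qed.

Lemma prob_big_le r q x N k : 0 <= r <= 1 -> (1 <= q)%nat -> 0 < x -> (1 <= N)%nat ->
  prob_big r x N k <=
  INR (fact q) * growth ((1 - r) * INR q) k N / (x * Rpower (INR N) (1 - r)) ^ q.
Proof.
  intros hr hq Hx HN. set (y := x * Rpower (INR N) (1 - r)).
  assert (Hy : 0 < y) by (apply Rmult_lt_0_compat; [exact Hx | apply exp_pos]).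
  rewrite prob_big_expect. fold y.
  apply Rle_trans with (expect r (N - 1) (fun h => / y ^ q * rising (INR (Rcount k h)) q)).
  - apply expect_le; [exact hr|]. intros h _. apply indicator_le_rising; [exact Hy | apply pos_INR].
  - rewrite expect_mult_l by exact hr. unfold Rdiv. rewrite (Rmult_comm _ (/ y ^ q)).
    apply Rmult_le_compat_l; [left; apply Rinv_0_lt_compat, pow_lt; exact Hy|].
    replace N with (S (N - 1)) at 2 by lia. apply expect_rising_le; assumption.
Qed.

Lemma lsum_growth b N :
  (b - 1) * lsum (seq 1 N) (fun k => growth b k N) = b * growth b 1 N - INR N.
Proof.
  destruct N as [|M]; [unfold lsum; simpl; ring|].
  induction M as [|M IH]; [unfold lsum; simpl; ring|].
  rewrite seq_S, lsum_app.
  rewrite (lsum_ext _ _ (fun k => (1 + b / INR (S M)) * growth b k (S M))).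
  2:{ intros k Hk. apply in_seq in Hk. rewrite growth_S by lia. ring. }
  rewrite lsum_mult_l, growth_S by discriminate.
  unfold lsum at 2. cbn [map fold_right]. rewrite growth_diag, (S_INR (S M)).
  transitivity ((1 + b / INR (S M)) * ((b - 1) * lsum (seq 1 (S M)) (fun k => growth b k (S M))) + (b - 1));
    [ring|].
  rewrite IH. field. apply not_0_INR. discriminate.
Qed.

Lemma tail_sum_le_growth r q x N : 0 <= r <= 1 -> (1 <= q)%nat -> 0 < x -> (1 <= N)%nat ->
  1 < (1 - r) * INR q ->
  tail_sum r x N <=
  INR (fact q) / (x * Rpower (INR N) (1 - r)) ^ q
  * ((1 - r) * INR q / ((1 - r) * INR q - 1)) * growth ((1 - r) * INR q) 1 N.
Proof.
  intros hr hq Hx HN Hb. set (b := (1 - r) * INR q) in *.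
  set (c := INR (fact q) / (x * Rpower (INR N) (1 - r)) ^ q).
  assert (Hc : 0 <= c).
  { apply Rdiv_le_0_compat; [apply pos_INR|].
    apply pow_lt, Rmult_lt_0_compat; [exact Hx | apply exp_pos]. }
  change (tail_sum r x N) with (lsum (seq 1 N) (prob_big r x N)).
  apply Rle_trans with (lsum (seq 1 N) (fun k => c * growth b k N)).
  { apply lsum_le. intros k _. unfold c, Rdiv.
    rewrite Rmult_assoc, (Rmult_comm (/ _)), <- Rmult_assoc. apply prob_big_le; assumption. }
  rewrite lsum_mult_l, Rmult_assoc. apply Rmult_le_compat_l; [exact Hc|].
  apply (Rmult_le_reg_l (b - 1)); [lra|]. rewrite lsum_growth.
  assert (0 <= growth b 1 N) by (apply growth_ge0; lra).
  assert (0 < INR N) by (apply lt_0_INR; lia).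
  unfold Rdiv. replace ((b - 1) * (b * / (b - 1) * growth b 1 N)) with (b * growth b 1 N) by (field; lra).
  lra.
Qed.

Lemma exp_le_compat u v : u <= v -> exp u <= exp v.
Proof. intros [H|<-]; [left; apply exp_increasing; exact H | right; reflexivity]. Qed.

Lemma one_le_exp u : 0 <= u -> 1 <= exp u.
Proof. intros Hu. pose proof (exp_ineq1_le u). lra. Qed.

Lemma inv_succ_le_ln_diff t : 0 < t -> / (t + 1) <= ln (t + 1) - ln t.
Proof.
  intros Ht. pose proof (exp_ineq1_le (- / (t + 1))) as H.
  replace (1 + - / (t + 1)) with (t / (t + 1)) in H by (field; lra).
  apply ln_le in H; [|apply Rdiv_lt_0_compat; lra].
  rewrite ln_exp, ln_div in H by lra. lra.
Qed.

Lemma growth1_le_small b m : INR m <= b -> growth b 1 (S m) <= (2 * b) ^ m / INR (fact m).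
Proof.
  induction m as [|m IH]; intros Hm; [simpl; lra|].
  rewrite growth_S by discriminate. rewrite S_INR in Hm.
  assert (Hm0 : 0 < INR (S m)) by (apply lt_0_INR; lia).
  assert (Hg : 0 <= growth b 1 (S m)) by (apply growth_ge0; pose proof (pos_INR m); lra).
  assert (Hfactor : 1 + b / INR (S m) <= 2 * b / INR (S m)).
  { rewrite S_INR in *. apply (Rmult_le_reg_r (INR m + 1)); [lra|].
    unfold Rdiv. rewrite Rmult_plus_distr_r, !Rmult_assoc, Rinv_l by lra. lra. }
  apply Rle_trans with ((2 * b) ^ m / INR (fact m) * (2 * b / INR (S m))).
  - assert (0 <= b / INR (S m)) by (apply Rdiv_le_0_compat; pose proof (pos_INR m); lra).
    apply Rmult_le_compat; [exact Hg | lra | |exact Hfactor].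
    apply IH. pose proof (pos_INR m). lra.
  - right. simpl pow. rewrite fact_simpl, mult_INR. field. split; [apply INR_fact_neq_0 | lra].
Qed.

(* By [1 + b/n <= exp (b/n)] and [b/(n+1) <= b (ln (n+1) - ln n)]; the factor
   [exp (b/n)] is what makes the sequence monotone. *)
Lemma growth1_normalized_le b L N : 0 <= b -> (1 <= L <= N)%nat ->
  growth b 1 N * exp (b / INR N) / Rpower (INR N) b
  <= growth b 1 L * exp (b / INR L) / Rpower (INR L) b.
Proof.
  intros Hb [HL HLN].
  assert (Hexp : forall n, growth b 1 n * exp (b / INR n) / Rpower (INR n) b
                           = growth b 1 n * exp (b / INR n - b * ln (INR n))).
  { intros n. unfold Rpower, Rminus. rewrite exp_plus, exp_Ropp.
    field. apply Rgt_not_eq, exp_pos. }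
  rewrite !Hexp. induction N as [|n IH]; [lia|].
  destruct (Nat.eq_dec L (S n)) as [->|HLn]; [lra|].
  eapply Rle_trans; [|apply IH; lia].
  rewrite growth_S by lia.
  set (t := INR n). assert (Ht : 0 < t) by (apply lt_0_INR; lia).
  rewrite S_INR. fold t.
  pose proof (growth_ge0 b 1 n Hb).
  rewrite Rmult_assoc. apply Rmult_le_compat_l; [assumption|].
  eapply Rle_trans.
  { apply Rmult_le_compat_r; [left; apply exp_pos | apply exp_ineq1_le]. }
  rewrite <- exp_plus. apply exp_le_compat.
  assert (b / (t + 1) <= b * (ln (t + 1) - ln t)).
  { unfold Rdiv. apply Rmult_le_compat_l; [exact Hb | apply inv_succ_le_ln_diff; exact Ht]. }
  lra.
Qed.

Lemma pow_le_Rpower b L l : INR l <= b <= L -> 1 <= L -> b ^ l <= Rpower L b.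
Proof.
  intros Hb HL. pose proof (pos_INR l).
  apply Rle_trans with (L ^ l); [apply pow_incr; lra|].
  rewrite <- Rpower_pow by lra. apply Rle_Rpower; lra.
Qed.

Lemma growth1_le b l N : INR l <= b <= INR l + 1 -> (S l <= N)%nat ->
  growth b 1 N <= 2 ^ l / INR (fact l) * exp 1 * Rpower (INR N) b.
Proof.
  intros Hl HN. set (L := INR (S l)).
  assert (HL : 1 <= L) by (unfold L; rewrite S_INR; pose proof (pos_INR l); lra).
  assert (Hb : 0 <= b) by (pose proof (pos_INR l); lra).
  assert (HN0 : 0 < INR N) by (apply lt_0_INR; lia).
  assert (HNb : 0 < Rpower (INR N) b) by apply exp_pos.
  assert (HLb : 0 < Rpower L b) by apply exp_pos.
  assert (Hfl : 0 < INR (fact l)) by apply INR_fact_lt_0.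
  assert (Hg : 0 <= growth b 1 N) by (apply growth_ge0; exact Hb).
  assert (Hsmall := growth1_le_small b l (proj1 Hl)).
  assert (Hcorr : exp (b / L) <= exp 1).
  { apply exp_le_compat. apply (Rmult_le_reg_r L); [lra|].
    unfold Rdiv. rewrite Rmult_assoc, Rinv_l by lra. unfold L. rewrite S_INR. lra. }
  assert (Hpow : b ^ l <= Rpower L b) by (apply pow_le_Rpower; [unfold L; rewrite S_INR; lra | exact HL]).
  apply Rle_trans with (growth b 1 N * exp (b / INR N) / Rpower (INR N) b * Rpower (INR N) b).
  { replace (growth b 1 N * exp (b / INR N) / Rpower (INR N) b * Rpower (INR N) b)
      with (growth b 1 N * exp (b / INR N)) by (field; lra).
    rewrite <- (Rmult_1_r (growth b 1 N)) at 1. apply Rmult_le_compat_l; [exact Hg|].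
    apply one_le_exp, Rdiv_le_0_compat; lra. }
  apply Rmult_le_compat_r; [lra|].
  eapply Rle_trans; [apply (growth1_normalized_le b (S l) N); [exact Hb | lia]|]. fold L.
  apply Rle_trans with ((2 * b) ^ l / INR (fact l) * exp 1 / Rpower L b).
  { apply Rmult_le_compat_r; [left; apply Rinv_0_lt_compat; exact HLb|].
    apply Rmult_le_compat; [apply growth_ge0 | left; apply exp_pos | |]; assumption. }
  replace ((2 * b) ^ l / INR (fact l) * exp 1 / Rpower L b)
    with (2 ^ l / INR (fact l) * exp 1 * (b ^ l / Rpower L b)) by (rewrite Rpow_mult_distr; field; lra).
  rewrite <- (Rmult_1_r (2 ^ l / INR (fact l) * exp 1)) at 2.
  apply Rmult_le_compat_l.
  - apply Rmult_le_pos; [apply Rdiv_le_0_compat; [apply pow_le|]; lra | left; apply exp_pos].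
  - apply (Rmult_le_reg_r (Rpower L b)); [exact HLb|].
    unfold Rdiv. rewrite Rmult_assoc, Rinv_l, Rmult_1_l, Rmult_1_r by lra. exact Hpow.
Qed.

Lemma fact_le_mul_pow l q : (l <= q)%nat -> (fact q <= fact l * q ^ (q - l))%nat.
Proof.
  intros Hlq. replace q with (l + (q - l))%nat at 1 by lia.
  assert (Hle : (l + (q - l) <= q)%nat) by lia. revert Hle. generalize (q - l)%nat as d.
  induction d as [|d IH]; intros Hd; [rewrite Nat.add_0_r; simpl; lia|].
  replace (l + S d)%nat with (S (l + d)) by lia. rewrite fact_simpl. simpl Nat.pow.
  specialize (IH ltac:(lia)). nia.
Qed.

Lemma INR_le_pow2 q : INR q <= 2 ^ q.
Proof.
  induction q as [|q IH]; [simpl; lra|]. rewrite S_INR. simpl.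
  assert (1 <= 2 ^ q) by (apply pow_R1_Rle; lra). lra.
Qed.

Lemma fact_ratio_le r q l : 0 <= r -> (1 <= q)%nat -> INR l <= (1 - r) * INR q <= INR l + 1 ->
  INR (fact q) * 2 ^ l / INR (fact l) <= (4 * Rpower (INR q) r) ^ q.
Proof.
  intros hr Hq [Hl1 Hl2].
  assert (Hq0 : 1 <= INR q) by (apply (le_INR 1); exact Hq).
  assert (Hlq : (l <= q)%nat) by (apply INR_le; nra).
  assert (Hfl : 0 < INR (fact l)) by apply INR_fact_lt_0.
  assert (Hf : INR (fact q) <= INR (fact l) * INR q ^ (q - l)).
  { rewrite <- pow_INR, <- mult_INR. apply le_INR, fact_le_mul_pow. exact Hlq. }
  assert (Hpw : INR q ^ (q - l) <= INR q * Rpower (INR q) r ^ q).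
  { rewrite <- (Rpower_pow (q - l)), <- (Rpower_pow q (Rpower _ r)), Rpower_mult
      by (try apply exp_pos; lra).
    replace (INR q * Rpower (INR q) (r * INR q)) with (Rpower (INR q) (1 + r * INR q))
      by (rewrite Rpower_plus, Rpower_1 by lra; reflexivity).
    apply Rle_Rpower; [exact Hq0|].
    rewrite minus_INR by exact Hlq. lra. }
  assert (H2l : 2 ^ l <= 2 ^ q) by (apply Rle_pow; [lra | exact Hlq]).
  assert (H2q := INR_le_pow2 q).
  assert (HA : 0 <= Rpower (INR q) r ^ q) by (apply pow_le; left; apply exp_pos).
  apply Rle_trans with (INR q * Rpower (INR q) r ^ q * 2 ^ l).
  - apply (Rmult_le_reg_r (INR (fact l))); [exact Hfl|].
    unfold Rdiv. rewrite Rmult_assoc, Rinv_l, Rmult_1_r by lra.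
    apply Rle_trans with (INR (fact l) * INR q ^ (q - l) * 2 ^ l).
    { apply Rmult_le_compat_r; [apply pow_le; lra | exact Hf]. }
    replace (INR q * Rpower (INR q) r ^ q * 2 ^ l * INR (fact l))
      with (INR (fact l) * (INR q * Rpower (INR q) r ^ q) * 2 ^ l) by ring.
    apply Rmult_le_compat_r; [apply pow_le; lra|]. apply Rmult_le_compat_l; [lra | exact Hpw].
  - rewrite Rpow_mult_distr.
    replace (4 ^ q) with (2 ^ q * 2 ^ q) by (rewrite <- Rpow_mult_distr; f_equal; lra).
    assert (0 < 2 ^ l) by (apply pow_lt; lra).
    apply Rle_trans with (2 ^ q * Rpower (INR q) r ^ q * 2 ^ q); [|right; ring].
    apply Rmult_le_compat; [nra | lra | apply Rmult_le_compat_r; lra | exact H2l].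
Qed.

Lemma tail_sum_le_pow r q l x N : 0 < r < 1 -> 0 < x -> 2 <= (1 - r) * INR q ->
  INR l <= (1 - r) * INR q <= INR l + 1 -> (S l <= N)%nat ->
  tail_sum r x N <= 2 * exp 1 * (4 * Rpower (INR q) r / x) ^ q.
Proof.
  intros hr Hx Hb Hl HN. set (b := (1 - r) * INR q) in *.
  assert (Hq : (1 <= q)%nat) by (destruct q; [unfold b in Hb; simpl in Hb; lra | lia]).
  assert (HN0 : 0 < INR N) by (apply lt_0_INR; lia).
  assert (Hy : (x * Rpower (INR N) (1 - r)) ^ q = x ^ q * Rpower (INR N) b).
  { rewrite Rpow_mult_distr, <- (Rpower_pow q (Rpower _ _)), Rpower_mult by apply exp_pos.
    reflexivity. }
  assert (Hxq : 0 < x ^ q) by (apply pow_lt; exact Hx).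
  assert (HNb : 0 < Rpower (INR N) b) by apply exp_pos.
  assert (Hden : 0 < x ^ q * Rpower (INR N) b) by (apply Rmult_lt_0_compat; assumption).
  assert (Hfq : 0 < INR (fact q)) by apply INR_fact_lt_0.
  assert (Hfl : 0 < INR (fact l)) by apply INR_fact_lt_0.
  assert (Hbb : b / (b - 1) <= 2).
  { apply (Rmult_le_reg_r (b - 1)); [lra|]. unfold Rdiv. rewrite Rmult_assoc, Rinv_l by lra. lra. }
  assert (Hgrowth := growth1_le b l N Hl HN).
  eapply Rle_trans; [apply (tail_sum_le_growth r q); fold b; lra || lia|]. fold b. rewrite Hy.
  apply Rle_trans with (INR (fact q) / (x ^ q * Rpower (INR N) b) * 2
                        * (2 ^ l / INR (fact l) * exp 1 * Rpower (INR N) b)).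
  { apply Rmult_le_compat; [| apply growth_ge0; lra | | exact Hgrowth].
    - apply Rmult_le_pos; [apply Rdiv_le_0_compat; lra | apply Rdiv_le_0_compat; lra].
    - apply Rmult_le_compat_l; [apply Rdiv_le_0_compat; lra | exact Hbb]. }
  replace (INR (fact q) / (x ^ q * Rpower (INR N) b) * 2
           * (2 ^ l / INR (fact l) * exp 1 * Rpower (INR N) b))
    with (2 * exp 1 * (INR (fact q) * 2 ^ l / INR (fact l) / x ^ q)) by (field; lra).
  apply Rmult_le_compat_l; [pose proof (exp_pos 1); lra|].
  replace ((4 * Rpower (INR q) r / x) ^ q) with ((4 * Rpower (INR q) r) ^ q / x ^ q)
    by (unfold Rdiv; rewrite (Rpow_mult_distr _ (/ x)), pow_inv; reflexivity).
  apply Rmult_le_compat_r; [left; apply Rinv_0_lt_compat; exact Hxq|].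
  apply fact_ratio_le; [lra | exact Hq | exact Hl].
Qed.

Lemma limsup_tail_sum_le r q x : 0 < r < 1 -> 0 < x -> 2 <= (1 - r) * INR q ->
  Rbar_le (LimSup_seq (fun N => tail_sum r x N)) (2 * exp 1 * (4 * Rpower (INR q) r / x) ^ q).
Proof.
  intros hr Hx Hb.
  destruct (nfloor_ex ((1 - r) * INR q)) as [l Hl]; [lra|].
  rewrite <- LimSup_seq_const. apply LimSup_le. exists (S l). intros N HN.
  apply (tail_sum_le_pow r q l); [exact hr | exact Hx | exact Hb | lra | exact HN].
Qed.

Lemma pow2_exp q : 2 ^ q = exp (ln 2 * INR q).
Proof. rewrite <- Rpower_pow by lra. unfold Rpower. f_equal. ring. Qed.

Lemma Rpower_div x y c : 0 < x -> 0 < y -> Rpower (x / y) c = Rpower x c / Rpower y c.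
Proof.
  intros Hx Hy. unfold Rpower. rewrite ln_div by assumption.
  unfold Rdiv. rewrite <- exp_Ropp, <- exp_plus. f_equal. ring.
Qed.

Lemma pow_ratio_le_exp_large r q x z : 1 <= x -> z < INR q + 1 -> Rpower (INR q) r <= x / 8 ->
  (4 * Rpower (INR q) r / x) ^ q <= 2 * exp (- (ln 2 * z)).
Proof.
  intros Hx Hz Hqr. pose proof ln_lt_2.
  apply Rle_trans with ((/ 2) ^ q).
  - apply pow_incr. split.
    + apply Rdiv_le_0_compat; [pose proof (exp_pos (r * ln (INR q))); unfold Rpower; lra | lra].
    + apply (Rmult_le_reg_r x); [lra|]. unfold Rdiv. rewrite Rmult_assoc, Rinv_l by lra. lra.
  - rewrite pow_inv, pow2_exp, <- exp_Ropp. rewrite <- (exp_ln 2) at 2 by lra.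
    rewrite <- exp_plus. apply exp_le_compat. nra.
Qed.

Lemma pow_ratio_le_exp_small r q x z : 1 <= x -> z <= INR q ->
  (4 * Rpower (INR q) r / x) ^ q <= (8 * Rpower (INR q) r) ^ q * exp (- (ln 2 * z)).
Proof.
  intros Hx Hz. pose proof ln_lt_2.
  assert (Hqr : 0 < Rpower (INR q) r) by apply exp_pos.
  replace (8 * Rpower (INR q) r) with (4 * Rpower (INR q) r * 2) by ring.
  rewrite Rpow_mult_distr, Rmult_assoc. rewrite <- (Rmult_1_r ((4 * Rpower (INR q) r / x) ^ q)).
  apply Rmult_le_compat; [apply pow_le, Rdiv_le_0_compat; lra | lra | |].
  - apply pow_incr. split; [apply Rdiv_le_0_compat; lra|].
    unfold Rdiv. rewrite <- (Rmult_1_r (4 * Rpower (INR q) r)) at 2.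
    apply Rmult_le_compat_l; [lra|]. rewrite <- Rinv_1. apply Rinv_le_contravar; lra.
  - rewrite pow2_exp, <- exp_plus. apply one_le_exp. nra.
Qed.

(* The order [q ~ (x/8)^(1/r)] makes the base [4 q^r / x] at most [1/2]. *)
Lemma exists_order_le_exp r q0 x : 0 < r -> (1 <= q0)%nat -> 1 <= x ->
  exists q, (q0 <= q)%nat /\
    (4 * Rpower (INR q) r / x) ^ q
    <= (2 + (8 * Rpower (INR q0) r) ^ q0) * exp (- (ln 2 * Rpower (x / 8) (1 / r))).
Proof.
  intros hr Hq0 Hx. set (z := Rpower (x / 8) (1 / r)).
  assert (Hz : 0 < z) by apply exp_pos.
  assert (He : 0 < exp (- (ln 2 * z))) by apply exp_pos.
  assert (HM : 0 <= (8 * Rpower (INR q0) r) ^ q0)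
    by (apply pow_le; pose proof (exp_pos (r * ln (INR q0))); unfold Rpower; lra).
  destruct (Rle_lt_dec (INR q0) z) as [Hbig|Hsmall].
  - destruct (nfloor_ex z) as [q Hq]; [lra|]. exists q.
    assert (Hqq0 : (q0 <= q)%nat).
    { assert (INR q0 < INR (S q)) by (rewrite S_INR; lra). apply INR_lt in H. lia. }
    split; [exact Hqq0|].
    assert (Hqr : Rpower (INR q) r <= x / 8).
    { replace (x / 8) with (Rpower z r)
        by (unfold z; rewrite Rpower_mult; replace (1 / r * r) with 1 by (field; lra); apply Rpower_1; lra).
      apply Rle_Rpower_l; [lra|]. split; [apply lt_0_INR; lia | lra]. }
    eapply Rle_trans; [apply (pow_ratio_le_exp_large r q x z); lra|]. nra.
  - exists q0. split; [lia|].
    eapply Rle_trans; [apply (pow_ratio_le_exp_small r q0 x z); lra|]. nra.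
Qed.

Theorem proposition1p5 (r : R) (hr : 0 < r < 1) :
  exists C1 C2 : R, 0 < C1 /\ 0 < C2 /\
    forall x : R, 1 <= x ->
      Rbar_le (LimSup_seq (fun N => tail_sum r x N))
              (Finite (C1 * exp (- (C2 * Rpower x (1 / r))))).
Proof.
  destruct (nfloor_ex (2 / (1 - r))) as [n0 Hn0]; [apply Rdiv_le_0_compat; lra|].
  set (q0 := S n0).
  assert (Hq0 : 2 <= (1 - r) * INR q0).
  { unfold q0. rewrite S_INR. apply (Rmult_le_reg_l (/ (1 - r))); [apply Rinv_0_lt_compat; lra|].
    rewrite <- Rmult_assoc, Rinv_l, Rmult_1_l by lra. unfold Rdiv in Hn0. lra. }
  set (M := (8 * Rpower (INR q0) r) ^ q0).
  assert (HM : 0 <= M) by (apply pow_le; pose proof (exp_pos (r * ln (INR q0))); unfold Rpower; lra).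
  exists (2 * exp 1 * (2 + M)), (ln 2 / Rpower 8 (1 / r)). repeat split.
  - pose proof (exp_pos 1). nra.
  - apply Rdiv_lt_0_compat; [rewrite <- ln_1; apply ln_increasing; lra | apply exp_pos].
  - intros x Hx.
    destruct (exists_order_le_exp r q0 x) as [q [Hq Hbound]]; [lra | unfold q0; lia | exact Hx|].
    eapply Rbar_le_trans.
    { apply limsup_tail_sum_le; [exact hr | lra|].
      apply Rle_trans with ((1 - r) * INR q0); [exact Hq0|].
      apply Rmult_le_compat_l; [lra | apply le_INR; exact Hq]. }
    simpl. rewrite Rpower_div in Hbound by lra.
    replace (ln 2 / Rpower 8 (1 / r) * Rpower x (1 / r))
      with (ln 2 * (Rpower x (1 / r) / Rpower 8 (1 / r))) by (field; apply Rgt_not_eq, exp_pos).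
    fold M in Hbound. rewrite (Rmult_assoc (2 * exp 1) (2 + M)).
    apply Rmult_le_compat_l; [pose proof (exp_pos 1); lra | exact Hbound].
Qed.
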